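(* Let $n\ge 2$, and let $S$ be a semitransitive subsemigroup of $\mathcal{I}_n\setminus\mathcal{S}_n$ with $|S|\le 2n$, let $g,h$ be its two non-zero idempotents, and let $S'=gSg\cup gSh\cup hSg\cup hSh$. Let $\varphi\in S'$ be nilpotent. Then for every $x\in\mathrm{dom}(\varphi)$, if $x\in X_i$ and $x\varphi\in X_j$, then $j>i$. In particular, a nilpotent element of $S'$ has no arrow from a transitivity block to itself.
   Context: $\mathcal{I}_n$ denotes the symmetric inverse semigroup of all partial injective maps of $X=\{1,\dots,n\}$ to itself, with maps written on the right and composed left to right; $0$ denotes the empty map, and $\varphi$ is nilpotent if $\varphi^k=0$ for some $k$. $\mathcal{S}_n$ is the symmetric group on $X$. A semigroup $S$ of partial transformations of $X$ is semitransitive if for all $x,y\in X$ there is $\varphi\in S$ with $x\varphi=y$ or $y\varphi=x$. It is known that such an $S$ (semitransitive in $\mathcal{I}_n\setminus\mathcal{S}_n$, $|S|\le 2n$) has exactly two non-zero idempotents $g,h$, with disjoint domains whose union is $X$. For $x,y\in X$ write $x\ge y$ if $x\varphi=y$ for some $\varphi\in S$; this is a total preorder, and its equivalence classes are the transitivity blocks $X_1,\dots,X_m$, numbered so that for $x\in X_i$, $y\in X_j$ one has $x\ge y$ iff $i\le j$. An element $\alpha$ has an arrow $x\to y$ if $x\in\mathrm{dom}(\alpha)$ and $x\alpha=y$. *)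

From mathcomp Require Import all_boot.
Set Implicit Arguments. Unset Strict Implicit. Unset Printing Implicit Defensive.

(* Partial transformations of X = {0,...,n-1} (standing for {1,...,n}):
   f x = Some y means x \in dom f and x f = y; f x = None means x \notin dom f. *)
Definition ptrans (n : nat) := {ffun 'I_n -> option 'I_n}.

Definition pinj n (f : ptrans n) : Prop :=
  forall x y z : 'I_n, f x = Some z -> f y = Some z -> x = y.

(* total map; a total partial injection of a finite set is a permutation,
   i.e. an element of S_n *)
Definition ptotal n (f : ptrans n) : Prop := forall x : 'I_n, f x <> None.

(* composition, maps written on the right, composed left to right:
   x (f g) = (x f) g *)
Definition tcomp n (f g : ptrans n) : ptrans n := [ffun x => obind g (f x)].

Definition pzero n : ptrans n := [ffun => None].
Definition pid n : ptrans n := [ffun x => Some x].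

Definition ppow n (f : ptrans n) (k : nat) : ptrans n := iter k (tcomp f) (pid n).

Definition nilpotent n (f : ptrans n) : Prop := exists k, ppow f k = pzero n.

Definition pidem n (e : ptrans n) : Prop := tcomp e e = e.

Definition semigroup n (S : {set ptrans n}) : Prop :=
  forall f g, f \in S -> g \in S -> tcomp f g \in S.

Definition semitransitive n (S : {set ptrans n}) : Prop :=
  forall x y : 'I_n, exists2 f, f \in S & (f x = Some y \/ f y = Some x).

(* the preorder x >= y : x f = y for some f in S *)
Definition reachS n (S : {set ptrans n}) (x y : 'I_n) : Prop :=
  exists2 f, f \in S & f x = Some y.

From mathcomp Require Import all_boot.
Set Implicit Arguments. Unset Strict Implicit. Unset Printing Implicit Defensive.

(* A "loop" p x = y, f y = x in S yields
      r ∈ S with pr ∈ {g, h}, a right inverse of p on a whole block of X.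
   3. Let φ = a s b with a, b ∈ {g, h}.  If φ x = y but y reaches x, then φ has
      a right inverse on all of dom a; nilpotency forces a ≠ b, and then every
      point z0 of X is the image of some point under an element c ∈ S that
      kills z0.  Taking z0 in the top block, the maps sending z0 to the n
      points, their products with c, and 0 give 2n+1 elements of S,
      contradicting |S| ≤ 2n. *)

Section PartialMaps.
Variable n : nat.
Implicit Types (f e u v : ptrans n) (z w : 'I_n).

Lemma tcompE u v z : tcomp u v z = obind v (u z).
Proof. by rewrite ffunE. Qed.

Lemma pidE z : pid n z = Some z.
Proof. by rewrite ffunE. Qed.

Lemma pzeroE z : pzero n z = None.
Proof. by rewrite ffunE. Qed.

Lemma tcompA u v f : tcomp (tcomp u v) f = tcomp u (tcomp v f).
Proof. by apply/ffunP => z; rewrite !tcompE; case: (u z) => //= w; rewrite tcompE. Qed.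

Lemma tcomp1l u : tcomp (pid n) u = u.
Proof. by apply/ffunP => z; rewrite tcompE pidE. Qed.

Lemma tcomp1r u : tcomp u (pid n) = u.
Proof. by apply/ffunP => z; rewrite tcompE; case: (u z) => //= w; rewrite pidE. Qed.

Lemma ppowS u k : ppow u k.+1 = tcomp u (ppow u k).
Proof. by []. Qed.

Lemma ppow_add u k l : ppow u (k + l) = tcomp (ppow u k) (ppow u l).
Proof. by elim: k => [|k IH]; rewrite ?tcomp1l // addSn !ppowS IH tcompA. Qed.

Lemma ppow_fix u z k : u z = Some z -> ppow u k z = Some z.
Proof. by move=> uz; elim: k => [|k IH]; rewrite ?pidE // ppowS tcompE uz. Qed.

Lemma exists_idempotent_power u : exists2 m, 0 < m & pidem (ppow u m).
Proof.
pose F (i : 'I_#|{: ptrans n}|.+1) := ppow u i.+1.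
have /injectivePn [i [j neq_ij EF]] : ~~ injectiveb F.
  by apply/injectiveP => /leq_card; rewrite card_ord ltnn.
have [p [d [p_gt0 d_gt0 Epd]]] :
    exists p d, [/\ 0 < p, 0 < d & ppow u (p + d) = ppow u p].
  case: (ltngtP i j) => [lt_ij|lt_ji|/val_inj eq_ij]; last by rewrite eq_ij eqxx in neq_ij.
  - by exists i.+1, (j - i); rewrite subn_gt0 addSn subnKC ?(ltnW lt_ij).
  - by exists j.+1, (i - j); rewrite subn_gt0 addSn subnKC ?(ltnW lt_ji).
have period k : p <= k -> ppow u (k + d) = ppow u k.
  by move=> le_pk; rewrite -(subnK le_pk) -addnA !(ppow_add u (k - p)) Epd.
have le_p_pd : p <= p * d by rewrite leq_pmulr.
have period_mul q : ppow u (p * d + q * d) = ppow u (p * d).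
  elim: q => [|q IH]; first by rewrite addn0.
  by rewrite mulSn addnA addnAC period ?IH // (leq_trans le_p_pd) ?leq_addr.
by exists (p * d); rewrite ?muln_gt0 ?p_gt0 // /pidem -ppow_add period_mul.
Qed.

Lemma pinj_idem_fix e z w : pinj e -> pidem e -> e z = Some w -> w = z.
Proof.
move=> e_inj e_idem ez; have: tcomp e e z = Some w by rewrite e_idem.
by rewrite tcompE ez => /(e_inj _ _ _)/(_ ez).
Qed.

Lemma pidem_tcomp e f : pinj e -> pidem e -> pinj f -> pidem f -> pidem (tcomp e f).
Proof.
move=> e_inj e_idem f_inj f_idem; apply/ffunP => z; rewrite !tcompE.
case ez: (e z) => [w|] //=; have eq_wz := pinj_idem_fix e_inj e_idem ez; subst w.
case fz: (f z) => [w|] //=; have eq_wz := pinj_idem_fix f_inj f_idem fz; subst w.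
by rewrite tcompE ez /= fz.
Qed.

Lemma tcomp_some u v z w : u z = Some w -> tcomp u v z = v w.
Proof. by move=> uz; rewrite tcompE uz. Qed.

Lemma not_nilpotent_of_invariant u (P : 'I_n -> Prop) z0 :
  P z0 -> (forall z, P z -> exists2 w, u z = Some w & P w) -> ~ nilpotent u.
Proof.
move=> Pz0 u_inv [k uk0].
suff: forall z, P z -> ppow u k z <> None by move/(_ z0 Pz0); rewrite uk0 pzeroE.
elim: k {uk0} => [|k IH] z Pz; first by rewrite pidE.
by have [w uz Pw] := u_inv z Pz; rewrite ppowS (tcomp_some _ uz); apply: IH.
Qed.

Variable S : {set ptrans n}.
Hypothesis S_semigroup : semigroup S.

Lemma tcomp_ppow_in u v k : u \in S -> v \in S -> tcomp v (ppow u k) \in S.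
Proof.
move=> uS; elim: k v => [|k IH] v vS; first by rewrite tcomp1r.
by rewrite ppowS -tcompA; apply/IH/S_semigroup.
Qed.

(* Counting: if a0 reaches every point and some c in S kills a0 but has a0
   in its image, then S has at least 2n+1 elements (the maps a0 |-> z, their
   products with c, and 0 are pairwise distinct). *)
Lemma card_lower_bound (a0 b0 : 'I_n) c :
  pzero n \in S -> c \in S -> c a0 = None -> c b0 = Some a0 ->
  (forall z, reachS S a0 z) -> (2 * n).+1 <= #|S|.
Proof.
move=> zeroS cS ca0 cb0 a0_reach.
have ex_sel z : exists f, (f \in S) && (f a0 == Some z).
  by have [f fS fa0] := a0_reach z; exists f; rewrite fS fa0 eqxx.
pose sel z := xchoose (ex_sel z).
have selS z : sel z \in S by case/andP: (xchooseP (ex_sel z)).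
have sel_a0 z : sel z a0 = Some z by case/andP: (xchooseP (ex_sel z)) => _ /eqP.
have csel_a0 z : tcomp c (sel z) a0 = None by rewrite tcompE ca0.
have csel_b0 z : tcomp c (sel z) b0 = Some z by rewrite (tcomp_some _ cb0).
pose F (o : option ('I_n + 'I_n)) :=
  match o with Some (inl z) => sel z | Some (inr z) => tcomp c (sel z)
             | None => pzero n end.
have F_inj : injective F.
  move=> [[z|z]|] [[z'|z']|] /= E;
  move: (congr1 (fun f : ptrans n => f a0) E) (congr1 (fun f : ptrans n => f b0) E);
  rewrite ?sel_a0 ?csel_a0 ?csel_b0 ?pzeroE; congruence.
have FS : F @: setT \subset S.
  by apply/subsetP => _ /imsetP[[[z|z]|] _ ->] //=; apply: S_semigroup.
move: (subset_leq_card FS).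
by rewrite card_imset // cardsT card_option card_sum card_ord mul2n -addnn.
Qed.

End PartialMaps.

Section TwoIdempotents.
Variables (n : nat) (S : {set ptrans n}) (g h : ptrans n).
Hypotheses (S_inj : forall f, f \in S -> pinj f)
           (S_nontotal : forall f, f \in S -> ~ ptotal f)
           (S_semigroup : semigroup S) (S_semitrans : semitransitive S)
           (gS : g \in S) (hS : h \in S) (g_idem : pidem g) (h_idem : pidem h)
           (S_idem : forall e, e \in S -> pidem e -> e <> pzero n -> e = g \/ e = h).
Implicit Types (e f p u : ptrans n) (x y z w : 'I_n).

Lemma basic_in_S e : e = g \/ e = h -> e \in S.
Proof. by case=> ->. Qed.

Lemma basic_fix e z w : e = g \/ e = h -> e z = Some w -> w = z.
Proof.
by move=> e_basic; apply: pinj_idem_fix; [apply/S_inj/basic_in_S|case: e_basic => ->].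
Qed.

Lemma loop_basic_power u z : u \in S -> u z = Some z ->
  exists m, (ppow u m.+1 = g \/ ppow u m.+1 = h) /\ ppow u m.+1 z = Some z.
Proof.
move=> uS uz; have [[|m] // _ idem_m] := exists_idempotent_power u.
have umz := ppow_fix m.+1 uz.
have umS : ppow u m.+1 \in S.
  by rewrite ppowS; apply: (tcomp_ppow_in S_semigroup).
exists m; split=> //; apply: (S_idem umS idem_m).
by move=> um0; rewrite um0 pzeroE in umz.
Qed.

(* By semitransitivity every point has a loop, so dom g ∪ dom h = X. *)
Lemma gh_cover z : g z = Some z \/ h z = Some z.
Proof.
have [f fS fz] := S_semitrans z z; have {}fz : f z = Some z by case: fz.
by have [m [[<-|<-] fmz]] := loop_basic_power fS fz; [left|right].
Qed.

(* gh is an idempotent; being g or h would make the other one total. *)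
Lemma gh_zero : tcomp g h = pzero n.
Proof.
have ghS : tcomp g h \in S by apply: S_semigroup.
case: (eqVneq (tcomp g h) (pzero n)) => [//|/eqP gh0].
have gh_idem : pidem (tcomp g h) by apply: pidem_tcomp => //; apply: S_inj.
case: (S_idem ghS gh_idem gh0) => E_gh.
- case: (S_nontotal hS) => z; case: (gh_cover z) => [gz|->] //.
  by move: (congr1 (fun f : ptrans n => f z) E_gh); rewrite /= (tcomp_some _ gz) gz => ->.
- case: (S_nontotal gS) => z; case: (gh_cover z) => [->|hz] //.
  move: (congr1 (fun f : ptrans n => f z) E_gh); rewrite /= tcompE hz.
  by case: (g z).
Qed.

Lemma zero_in_S : pzero n \in S.
Proof. by rewrite -gh_zero; apply: S_semigroup. Qed.

Lemma gh_disjoint z : g z = Some z -> h z = Some z -> False.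
Proof.
move=> gz hz; move: (congr1 (fun f : ptrans n => f z) gh_zero).
by rewrite /= (tcomp_some _ gz) hz pzeroE.
Qed.

Lemma basic_eq e e' z : e = g \/ e = h -> e' = g \/ e' = h ->
  e z = Some z -> e' z = Some z -> e = e'.
Proof.
by case=> -> [] -> // gz hz; case: (gh_disjoint gz hz) || case: (gh_disjoint hz gz).
Qed.

Lemma basic_split a b z : a = g \/ a = h -> b = g \/ b = h -> a <> b ->
  (a z = Some z /\ b z = None) \/ (b z = Some z /\ a z = None).
Proof.
move=> a_basic b_basic neq_ab.
have fixed e : e = g \/ e = h -> e z = None \/ e z = Some z.
  by move=> e_basic; case ez: (e z) => [w|]; [rewrite (basic_fix e_basic ez); right|left].
have cover : a z = Some z \/ b z = Some z.
  by case: a_basic b_basic neq_ab => -> [] -> //; case: (gh_cover z); auto.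
case: (fixed _ a_basic) (fixed _ b_basic) => [az|az] [bz|bz]; rewrite az bz.
- by case: cover => [|]; rewrite ?az ?bz.
- by right.
- by left.
- by case: neq_ab; apply: (basic_eq a_basic b_basic az bz).
Qed.

(* A loop p x = y, f y = x in S produces r ∈ S with r y = x, dom r ⊆ dom f,
   and pr basic: r is a right inverse of p on the domain of pr. *)
Lemma loop_right_inverse p f x y : p \in S -> f \in S ->
  p x = Some y -> f y = Some x ->
  exists2 r, r \in S & [/\ r y = Some x, forall w, r w <> None -> f w <> None
                         & tcomp p r = g \/ tcomp p r = h].
Proof.
move=> pS fS px fy; pose u := tcomp p f.
have ux : u x = Some x by rewrite (tcomp_some _ px).
have [m [um_basic _]] := loop_basic_power (S_semigroup pS fS) ux.
exists (tcomp f (ppow u m)); first exact: tcomp_ppow_in (S_semigroup pS fS) fS.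
split.
- by rewrite (tcomp_some _ fy) ppow_fix.
- by move=> w; rewrite tcompE; case: (f w).
- by rewrite -tcompA.
Qed.

Section Sandwich.
Variables (a b s phi : ptrans n).
Hypotheses (a_basic : a = g \/ a = h) (b_basic : b = g \/ b = h) (sS : s \in S)
           (phi_def : phi = tcomp (tcomp a s) b).

Lemma sandwich_in : phi \in S.
Proof.
have [aS bS] := (basic_in_S a_basic, basic_in_S b_basic).
by rewrite phi_def; apply: S_semigroup => //; apply: S_semigroup.
Qed.

Lemma sandwich_dom z w : phi z = Some w -> a z = Some z /\ b w = Some w.
Proof.
rewrite phi_def !tcompE.
case az: (a z) => [z'|] //=; move: (basic_fix a_basic az) => eq_z'; subst z'.
case: (s z) => [t|] //= bt; have eq_wt := basic_fix b_basic bt.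
by subst w.
Qed.

Variables (x y : 'I_n) (f : ptrans n).
Hypotheses (phi_xy : phi x = Some y) (fS : f \in S) (f_yx : f y = Some x).

Lemma sandwich_right_inverse : exists2 r, r \in S & r y = Some x /\
  forall z, a z = Some z -> exists2 w, phi z = Some w & r w = Some z.
Proof.
have [r rS [r_yx _ phir_basic]] := loop_right_inverse sandwich_in fS phi_xy f_yx.
exists r => //; split=> // z az.
have phir_x : tcomp phi r x = Some x by rewrite (tcomp_some _ phi_xy).
have phir_a := basic_eq phir_basic a_basic phir_x (sandwich_dom phi_xy).1.
move: (congr1 (fun e : ptrans n => e z) phir_a); rewrite /= az tcompE.
by case: (phi z) => [w|] //= rw; exists w.
Qed.

Lemma sandwich_killer : nilpotent phi ->
  forall z0, exists b0 c, [/\ c \in S, c z0 = None & c b0 = Some z0].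
Proof.
move=> phi_nil z0; have [r rS [r_yx r_inv]] := sandwich_right_inverse.
(* if a = b, then φ maps dom a totally into itself *)
have neq_ab : a <> b.
  move=> eq_ab.
  apply: (@not_nilpotent_of_invariant _ phi (fun z => a z = Some z) x _ _ phi_nil).
    exact: (sandwich_dom phi_xy).1.
  move=> z az; have [w phi_zw _] := r_inv z az.
  by exists w; rewrite // eq_ab; case: (sandwich_dom phi_zw).
have [q qS [q_xy q_dom rq_basic]] := loop_right_inverse rS sandwich_in r_yx phi_xy.
case: (basic_split z0 a_basic b_basic neq_ab) => [[az0 bz0]|[bz0 az0]].
- have [w phi_z0w rw] := r_inv z0 az0.
  exists w, (tcomp b r); split; first exact/S_semigroup/rS/basic_in_S.
    by rewrite tcompE bz0.
  by rewrite (tcomp_some _ (sandwich_dom phi_z0w).2).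
- have rq_y : tcomp r q y = Some y by rewrite (tcomp_some _ r_yx).
  have rq_b := basic_eq rq_basic b_basic rq_y (sandwich_dom phi_xy).2.
  move: (congr1 (fun e : ptrans n => e z0) rq_b); rewrite /= bz0 tcompE.
  case rz0: (r z0) => [w|] //= qw.
  have [w' phi_ww'] : exists w', phi w = Some w'.
    case phi_w: (phi w) => [w'|]; first by exists w'.
    by case: (q_dom w); rewrite ?qw ?phi_w.
  exists w, (tcomp a q); split; first exact/S_semigroup/qS/basic_in_S.
    by rewrite tcompE az0.
  by rewrite (tcomp_some _ (sandwich_dom phi_ww').1).
Qed.

End Sandwich.
End TwoIdempotents.

Theorem lemma3p2 (n : nat) (S : {set ptrans n}) (g h : ptrans n)
  (Hn : 2 <= n)
  (Hinj : forall f, f \in S -> pinj f)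
  (HnotSn : forall f, f \in S -> ~ ptotal f)
  (Hsemi : semigroup S)
  (Htrans : semitransitive S)
  (Hcard : #|S| <= 2 * n)
  (HgS : g \in S) (HhS : h \in S)
  (Hg : pidem g) (Hh : pidem h)
  (Hg0 : g <> pzero n) (Hh0 : h <> pzero n) (Hgh : g <> h)
  (Honly : forall e, e \in S -> pidem e -> e <> pzero n -> e = g \/ e = h)
  (phi : ptrans n)
  (Hphi : exists (a b s : ptrans n), [/\ (a = g \/ a = h), (b = g \/ b = h),
                             s \in S & phi = tcomp (tcomp a s) b])
  (Hnil : nilpotent phi)
  (blk : 'I_n -> nat)
  (Hblk : forall x y : 'I_n, reachS S x y <-> blk x <= blk y)
  (x y : 'I_n) (Hxy : phi x = Some y) :
  blk x < blk y.
Proof.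
have [a [b [s [a_basic b_basic sS phi_def]]]] := Hphi.
rewrite ltnNge; apply/negP => /(Hblk y x).2 [f fS f_yx].
have [a0 a0_top] : exists a0, forall z, reachS S a0 z.
  by exists [arg min_(i < x) blk i]; case: arg_minnP => // i _ i_min z; apply/Hblk/i_min.
have [b0 [c [cS ca0 cb0]]] :=
  sandwich_killer Hinj HnotSn Hsemi Htrans HgS HhS Hg Hh Honly
    a_basic b_basic sS phi_def Hxy fS f_yx Hnil a0.
have zeroS := zero_in_S Hinj HnotSn Hsemi Htrans HgS HhS Hg Hh Honly.
by move: (card_lower_bound Hsemi zeroS cS ca0 cb0 a0_top); rewrite ltnNge Hcard.
Qed.
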